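(* Consider an exponential bottleneck game on a graph $G$, a Nash-routing $\mathbf{p}=[p_1,\dots,p_N]$ and a routing $\mathbf{p}^*=[p_1^*,\dots,p_N^*]$ of minimum social cost, and suppose $C^*=C(\mathbf{p}^* )=1$ and $L^*\ge 2$. Let $\hat C=\lceil\max_i\log_2\widetilde C_i(\mathbf{p})\rceil$ and $l_1^*=\log_2(L^*-1)$. Then for every integer $i$ with $1\le i\le \hat C-l_1^*-11$, every non-empty set of players $X\subseteq S^{(i)}$ is not self-sufficient in $\mathbf{p}$.
   Context: Player $\pi_i$ has a strategy set $\mathcal{P}_i$ of paths from $u_i$ to $v_i$; a routing is $\mathbf{p}=[p_1,\dots,p_N]$ with $p_i\in\mathcal{P}_i$. $C_e(\mathbf{p})$ is the number of paths in $\mathbf{p}$ using edge $e$; social cost $C(\mathbf{p})=\max_eC_e(\mathbf{p})$; player cost $\widetilde C_i(\mathbf{p})=\sum_{e\in p_i}2^{C_e(\mathbf{p})}$. A Nash-routing is one in which no player can strictly lower its cost by unilaterally switching to another path in its strategy set. $L^*$ is the maximum length (number of edges) of a path in $\mathbf{p}^*$. Stage $i$ ($1\le i\le\hat C$): $S^{(i)}$ is the set of players $\pi_j$ whose cost in $\mathbf{p}$ satisfies $2^{\hat C-i}+2\le\widetilde C_j(\mathbf{p})\le 2^{\hat C-i+1}$. Self-sufficiency: for a set $S$ of players and $\pi_j\in S$, let $\mathbf{q}_j$ be the routing consisting only of the players in $S$, where every player of $S$ other than $\pi_j$ uses its path from $\mathbf{p}$ and $\pi_j$ uses $p_j^*$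 (congestions in $\mathbf{q}_j$ count only these paths). $S$ is self-sufficient in $\mathbf{p}$ if for every $\pi_j\in S$ the cost of $\pi_j$ in $\mathbf{q}_j$, $\sum_{e\in p_j^*}2^{C_e(\mathbf{q}_j)}$, is at least $\widetilde C_j(\mathbf{p})$. Logarithms are base 2. *)

From Stdlib Require Import Reals.
From mathcomp Require Import all_boot.
Set Implicit Arguments. Unset Strict Implicit. Unset Printing Implicit Defensive.

Section Bottleneck.
Variables (V E : finType) (ends : E -> V * V).

Definition joins (e : E) (x y : V) : bool :=
  (ends e == (x, y)) || (ends e == (y, x)).

(* p (a sequence of edges) is a simple path from u to v: the vertex
   sequence u = x_0, x_1, ..., x_k = v (k = size p) is duplicate-free and
   the t-th edge of p joins x_t and x_{t+1}. *)
Definition is_path (u v : V) (p : seq E) : Prop :=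
  exists ys : seq V,
    [/\ size ys = size p, uniq (u :: ys), last u ys = v &
        all2 (fun e xy => joins e xy.1 xy.2) p (zip (u :: ys) ys)].

Variable N : nat.
Definition routing := 'I_N -> seq E.

Definition cong (p : routing) (e : E) : nat := #|[set i | e \in p i]|.

Definition social_cost (p : routing) : nat := \max_(e : E) cong p e.

Definition pcost (p : routing) (i : 'I_N) : nat :=
  \sum_(e <- p i) 2 ^ cong p e.

Definition valid (P : 'I_N -> seq E -> Prop) (p : routing) : Prop :=
  forall i, P i (p i).

Definition switch (p : routing) (i : 'I_N) (q : seq E) : routing :=
  fun j => if j == i then q else p j.

Definition nash (P : 'I_N -> seq E -> Prop) (p : routing) : Prop :=
  valid P p /\
  forall i q, P i q -> ~ (pcost (switch p i q) i < pcost p i).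

Definition optimal (P : 'I_N -> seq E -> Prop) (p : routing) : Prop :=
  valid P p /\ forall p', valid P p' -> social_cost p <= social_cost p'.

Definition maxlen (p : routing) : nat := \max_(i < N) size (p i).

(* hat C = ceil (max_i log2 ~C_i(p)) : smallest c with max_i ~C_i(p) <= 2^c *)
Definition hatC (p : routing) : nat := up_log 2 (\max_(i < N) pcost p i).

Definition stage (p : routing) (i : nat) : {set 'I_N} :=
  [set j | (2 ^ (hatC p - i) + 2 <= pcost p j) && (pcost p j <= 2 ^ (hatC p - i + 1))].

(* congestion in q_j: players of S other than j with their p-paths,
   plus j with p*_j *)
Definition cong_q (S : {set 'I_N}) (p pstar : routing) (j : 'I_N) (e : E) : nat :=
  #|[set k in S | (k != j) && (e \in p k)]| + (e \in pstar j).

Definition self_sufficient (S : {set 'I_N}) (p pstar : routing) : Prop :=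
  forall j, j \in S ->
    pcost p j <= \sum_(e <- pstar j) 2 ^ cong_q S p pstar j e.

End Bottleneck.

Definition log2 (x : R) : R := Rdiv (ln x) (ln (IZR 2)).

From Stdlib Require Import Reals Lra Lia.
From mathcomp Require Import all_boot zify.
Set Implicit Arguments. Unset Strict Implicit. Unset Printing Implicit Defensive.

(* Were X self-sufficient, let [n_e] count the players of X whose path in [p]
   uses [e].  In [q_j] player [j] pays at most [2^(n_e + 1)] on each edge [e]
   of [p*_j], and [4 * 2^(n + 1) <= 1024 + n 2^n].  As [C* = 1] the paths of
   [p*] are edge disjoint, so over X the terms [n_e 2^(n_e)] add up to at most
   the total cost of X in [p]; hence [3 * cost(X) <= 1024 |X| L*].  But in
   stage [i] each cost exceeds [2^(hatC - i) >= 2^11 (L* - 1) >= 1024 L*]. *)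

Section SimplePaths.
Variables (V E : finType) (ends : E -> V * V).

Lemma ends_mem_path_vertices (p : seq E) (x : V) (ys : seq V) (e : E) :
  all2 (fun e xy => joins ends e xy.1 xy.2) p (zip (x :: ys) ys) -> e \in p ->
  ((ends e).1 \in x :: ys) && ((ends e).2 \in x :: ys).
Proof.
elim: p x ys => [//|e' p IH] x [//|y ys] /= /andP[Hj Ha].
rewrite inE => /orP[/eqP->|He].
  by move: Hj; rewrite /joins => /orP[] /eqP ->; rewrite /= !inE !eqxx ?orbT.
have /andP[h1 h2] := IH _ _ Ha He.
by rewrite inE h1 orbT inE h2 orbT.
Qed.

Lemma is_path_uniq (u v : V) (p : seq E) : is_path ends u v p -> uniq p.
Proof.
case=> ys [_ Hu _ Ha].
elim: p u ys Hu Ha => [//|e p IH] u [//|y ys] Hu /= /andP[Hj Ha].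
rewrite (IH y ys _ Ha) ?andbT; last by case/andP: Hu.
apply/negP => He; have /andP[h1 h2] := ends_mem_path_vertices Ha He.
move: Hu => /= /andP[Hu _].
by move: Hj; rewrite /joins => /orP[] /eqP Hends; rewrite Hends /= in h1 h2;
  [rewrite h1 in Hu | rewrite h2 in Hu].
Qed.

End SimplePaths.

Lemma expn2S_le_affine (n : nat) : 4 * 2 ^ n.+1 <= 1024 + n * 2 ^ n.
Proof.
rewrite expnS; case: (ltnP n 8) => hn; last by nia.
have : 2 ^ n <= 2 ^ 7 by rewrite leq_exp2l //; lia.
by rewrite (_ : 2 ^ 7 = 128) //; lia.
Qed.

Section SelfSufficiency.
Variables (E : finType) (N : nat) (p pstar : routing E N) (X : {set 'I_N}).

Definition cong_in (e : E) : nat := #|[set k in X | e \in p k]|.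

Hypothesis p_uniq : forall k, uniq (p k).
Hypothesis pstar_uniq : forall j, uniq (pstar j).
Hypothesis pstar_cong_le1 : forall e, cong pstar e <= 1.

Lemma cong_q_le_cong_in (j : 'I_N) (e : E) : cong_q X p pstar j e <= (cong_in e).+1.
Proof.
rewrite /cong_q -addn1 leq_add //; last by case: (_ \in _).
by apply: subset_leq_card; apply/subsetP => k; rewrite !inE => /and3P[-> _ ->].
Qed.

Lemma cong_in_le_cong (e : E) : cong_in e <= cong p e.
Proof. by apply: subset_leq_card; apply/subsetP => k; rewrite !inE => /andP[_ ->]. Qed.

Lemma self_sufficient_pcost_le (j : 'I_N) : j \in X -> self_sufficient X p pstar ->
  4 * pcost p j <= 1024 * size (pstar j) + \sum_(e <- pstar j) cong_in e * 2 ^ cong_in e.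
Proof.
move=> Xj /(_ j Xj) Hj; apply: leq_trans (leq_mul (leqnn 4) Hj) _.
rewrite -sum1_size !big_distrr -big_split /=.
apply: leq_sum => e _; apply: leq_trans (expn2S_le_affine _).
by rewrite leq_mul2l leq_exp2l // cong_q_le_cong_in.
Qed.

Lemma sum_edge_disjoint_le (f : E -> nat) :
  \sum_(j in X) \sum_(e <- pstar j) f e <= \sum_e f e.
Proof.
under eq_bigr => j _ do rewrite big_uniq // big_mkcond.
rewrite exchange_big /=; apply: leq_sum => e _.
rewrite -big_mkcondr sum_nat_const -[leqRHS]mul1n leq_mul2r.
apply/orP; right; apply: leq_trans (pstar_cong_le1 e).
by apply: subset_leq_card; apply/subsetP => j; rewrite !inE => /andP[_ ->].
Qed.

Lemma sum_cong_in_le_pcost :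
  \sum_e cong_in e * 2 ^ cong_in e <= \sum_(k in X) pcost p k.
Proof.
have cong_inE e : cong_in e * 2 ^ cong p e =
    \sum_(k in X) (if e \in p k then 2 ^ cong p e else 0).
  by rewrite -big_mkcondr sum_nat_const /cong_in cardsE.
apply: leq_trans (_ : \sum_e cong_in e * 2 ^ cong p e <= _).
  by apply: leq_sum => e _; rewrite leq_mul2l leq_exp2l // cong_in_le_cong orbT.
under eq_bigr => e _ do rewrite cong_inE.
rewrite exchange_big /=; apply: leq_sum => k _.
by rewrite /pcost (big_uniq _ (p_uniq k)) [leqRHS]big_mkcond.
Qed.

Lemma self_sufficient_sum_pcost_le : self_sufficient X p pstar ->
  3 * \sum_(k in X) pcost p k <= 1024 * \sum_(j in X) size (pstar j).
Proof.
move=> Hss.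
have cost4_le : 4 * \sum_(k in X) pcost p k <=
    1024 * \sum_(j in X) size (pstar j) + \sum_(k in X) pcost p k.
  rewrite !big_distrr /=; apply: leq_trans (_ : \sum_(j in X)
      (1024 * size (pstar j) + \sum_(e <- pstar j) cong_in e * 2 ^ cong_in e) <= _).
    by apply: leq_sum => j Xj; exact: self_sufficient_pcost_le.
  rewrite big_split leq_add2l /=.
  exact: leq_trans (sum_edge_disjoint_le _) sum_cong_in_le_pcost.
lia.
Qed.

End SelfSufficiency.

Open Scope R_scope.

Lemma INR_expn2 (d : nat) : INR (2 ^ d)%N = 2 ^ d.
Proof. by elim: d => [//|d IH]; rewrite expnS -multE mult_INR IH /=. Qed.

Lemma ln2_gt0 : 0 < ln 2.
Proof. by have := ln_lt_2; lra. Qed.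

Lemma log2_INR_ge0 (m : nat) : 0 <= log2 (INR m).
Proof.
rewrite /log2 /Rdiv; apply: Rmult_le_pos; last exact/Rlt_le/Rinv_0_lt_compat/ln2_gt0.
case: m => [|m].
  change (INR 0) with 0; rewrite /ln; case: Rlt_dec => [h|_]; last exact: Rle_refl.
  by case: (Rlt_irrefl _ h).
rewrite -ln_1; case: (Rle_lt_or_eq_dec 1 (INR m.+1)) => [|h|<-]; last exact: Rle_refl.
- by apply: (le_INR 1); apply/leP.
- by left; apply: ln_increasing; lra.
Qed.

Lemma log2_INR_le_expn2 (m d : nat) : log2 (INR m) <= INR d -> (m <= 2 ^ d)%N.
Proof.
rewrite /log2 /Rdiv => Hlog.
case: (leqP m (2 ^ d)) => // /ltP /lt_INR; rewrite INR_expn2 => hlt.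
have := ln_increasing _ _ (pow_lt 2 d ltac:(lra)) hlt.
rewrite ln_pow; last lra.
have := Rmult_le_compat_r (ln 2) _ _ (Rlt_le _ _ ln2_gt0) Hlog.
by rewrite Rmult_assoc Rinv_l; have := ln2_gt0; lra.
Qed.

Lemma stage_gap (i h m : nat) :
  INR i <= INR h - log2 (INR m) - IZR 11 -> (2 ^ 11 * m <= 2 ^ (h - i))%N.
Proof.
have -> : IZR 11 = INR 11 by rewrite INR_IZR_INZ.
move=> H; have := log2_INR_ge0 m => lg0.
have Hih : (i + 11 <= h)%N by apply/leP; apply: INR_le; rewrite plus_INR; lra.
have -> : (h - i = 11 + (h - i - 11))%N by lia.
rewrite expnD leq_mul2l; apply/orP; right; apply: log2_INR_le_expn2.
by rewrite !minus_INR; try (apply/leP; lia); lra.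
Qed.

Close Scope R_scope.

Theorem lemma2 (V E : finType) (ends : E -> V * V) (N : nat)
  (u v : 'I_N -> V) (P : 'I_N -> seq E -> Prop)
  (HP : forall i q, P i q -> is_path ends (u i) (v i) q)
  (p pstar : routing E N)
  (Hnash : nash P p) (Hopt : optimal P pstar)
  (HC1 : social_cost pstar = 1%N)
  (HL : (2 <= maxlen pstar)%N) :
  forall i : nat, (1 <= i)%N ->
    Rle (INR i) (Rminus (Rminus (INR (hatC p)) (log2 (INR (maxlen pstar - 1)))) (IZR 11)) ->
  forall X : {set 'I_N}, X != set0 -> X \subset stage p i ->
    ~ self_sufficient X p pstar.
Proof.
move=> i _ Hgap X HX0 HXs Hss.
have Huniq (q : routing E N) : valid P q -> forall k, uniq (q k).
  by move=> Hq k; exact: is_path_uniq (HP _ _ (Hq k)).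
have Hcong e : cong pstar e <= 1 by rewrite -HC1; exact: leq_bigmax.
have := self_sufficient_sum_pcost_le (Huniq _ Hnash.1) (Huniq _ Hopt.1) Hcong Hss.
have Hcost : \sum_(k in X) (2 ^ 11 * (maxlen pstar - 1) + 2) <= \sum_(k in X) pcost p k.
  apply: leq_sum => k /(subsetP HXs); rewrite inE => /andP[Hk _].
  by apply: leq_trans Hk; rewrite leq_add2r; exact: stage_gap Hgap.
have Hlen : \sum_(j in X) size (pstar j) <= \sum_(j in X) maxlen pstar.
  by apply: leq_sum => j _; exact: (leq_bigmax (F := fun j => size (pstar j))).
have HX : 0 < #|X| by rewrite card_gt0.
rewrite !sum_nat_const in Hcost Hlen; nia.
Qed.
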